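(* If $H\in\mathcal{H}_-$, then $H_{L_H^{**}}(x,y)\le -H_{L_H^{**}}(y,x)$ for all $x,y\in\bar\Omega$; that is, the restriction of $H_{L_H^{**}}$ to $\bar\Omega\times\bar\Omega$ belongs to $\mathcal{H}_-$.
   Context: $\Omega\subset\mathbb{R}^N$ is a bounded domain with $\bar\Omega\subset B_R$, the ball of radius $R>0$ centered at the origin. $\mathcal{H}_-$ is the set of continuous $H$ on $\bar\Omega\times\bar\Omega$ with $H(x,y)\le -H(y,x)$ for all $x,y$. For such $H$: $L_H(x,p)=\sup_{y\in\bar\Omega}\{\langle y,p\rangle-H(y,x)\}$; $L_H^*(q,y)=\sup_{x\in\bar\Omega,\,p\in B_R}\{\langle y,p\rangle+\langle q,x\rangle-L_H(x,p)\}$; $L_H^{**}(y,q)=\sup_{x\in\bar\Omega,\,p\in B_R}\{\langle y,p\rangle+\langle q,x\rangle-L_H^*(p,x)\}$. For a function $L$ on $\mathbb{R}^N\times\mathbb{R}^N$, $H_L(x,y)=\sup_{p\in B_R}\{\langle x,p\rangle-L(y,p)\}$. *)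

From Stdlib Require Import Reals ClassicalEpsilon Classical.
Open Scope R_scope.

(* Vectors of R^N: functions nat -> R vanishing from index N on. *)
Definition vec (N : nat) := {x : nat -> R | forall i, (N <= i)%nat -> x i = 0}.
Definition coord {N : nat} (x : vec N) : nat -> R := proj1_sig x.

Fixpoint rsum (n : nat) (f : nat -> R) : R :=
  match n with O => 0 | S k => rsum k f + f k end.

Definition inner {N : nat} (x y : vec N) : R :=
  rsum N (fun i => coord x i * coord y i).
Definition vnorm {N : nat} (x : vec N) : R := sqrt (inner x x).
Definition vdist {N : nat} (x y : vec N) : R :=
  sqrt (rsum N (fun i => (coord x i - coord y i) ^ 2)).

Definition in_ball {N : nat} (r : R) (p : vec N) : Prop := vnorm p < r.

Definition closure {N : nat} (S : vec N -> Prop) (x : vec N) : Prop :=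
  forall eps, 0 < eps -> exists y, S y /\ vdist x y < eps.
Definition is_open {N : nat} (S : vec N -> Prop) : Prop :=
  forall x, S x -> exists eps, 0 < eps /\ forall y, vdist y x < eps -> S y.
Definition is_connected {N : nat} (S : vec N -> Prop) : Prop :=
  ~ (exists U V : vec N -> Prop, is_open U /\ is_open V /\
       (forall x, S x -> U x \/ V x) /\
       (exists x, S x /\ U x) /\ (exists x, S x /\ V x) /\
       (forall x, S x -> U x -> V x -> False)).
Definition is_bounded {N : nat} (S : vec N -> Prop) : Prop :=
  exists M, forall x, S x -> vnorm x <= M.
Definition is_domain {N : nat} (S : vec N -> Prop) : Prop :=
  (exists x, S x) /\ is_open S /\ is_connected S.

(* Supremum of a set of reals (real-valued; all sups in this statement are
   of nonempty bounded-above sets; default 0 otherwise). *)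
Definition Rsup (E : R -> Prop) : R :=
  match excluded_middle_informative (bound E) with
  | left Hb =>
      match excluded_middle_informative (exists x, E x) with
      | left He => proj1_sig (completeness E Hb He)
      | right _ => 0
      end
  | right _ => 0
  end.

Definition cont_on_cl2 {N : nat} (Om : vec N -> Prop) (H : vec N -> vec N -> R) : Prop :=
  forall x y, closure Om x -> closure Om y ->
  forall eps, 0 < eps -> exists d, 0 < d /\
    forall x' y', closure Om x' -> closure Om y' ->
      vdist x x' < d -> vdist y y' < d -> Rabs (H x' y' - H x y) < eps.

Definition in_Hminus {N : nat} (Om : vec N -> Prop) (H : vec N -> vec N -> R) : Prop :=
  cont_on_cl2 Om H /\
  forall x y, closure Om x -> closure Om y -> H x y <= - H y x.

Definition L_H {N : nat} (Om : vec N -> Prop) (H : vec N -> vec N -> R)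
  (x p : vec N) : R :=
  Rsup (fun v => exists y, closure Om y /\ v = inner y p - H y x).

Definition L_H_star {N : nat} (Rad : R) (Om : vec N -> Prop) (H : vec N -> vec N -> R)
  (q y : vec N) : R :=
  Rsup (fun v => exists x p, closure Om x /\ in_ball Rad p /\
          v = inner y p + inner q x - L_H Om H x p).

Definition L_H_star2 {N : nat} (Rad : R) (Om : vec N -> Prop) (H : vec N -> vec N -> R)
  (y q : vec N) : R :=
  Rsup (fun v => exists x p, closure Om x /\ in_ball Rad p /\
          v = inner y p + inner q x - L_H_star Rad Om H p x).

Definition H_L {N : nat} (Rad : R) (L : vec N -> vec N -> R) (x y : vec N) : R :=
  Rsup (fun v => exists p, in_ball Rad p /\ v = inner x p - L y p).

(* Since the closure of Om is compact and H is continuous on it, H is bounded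
   below there; together with |<a,b>| <= N R^2 on B_R this makes every
   supremum in L_H, L_H^*, L_H^** finite.  The antisymmetry H(x,y) <= -H(y,x)
   then gives L_H^*(p,x) <= L_H(x,p), and unfolding one more conjugate gives
   L_H^*(q,x) <= L_H^**(x,q).  Hence, for x, y in the closure and p, q in B_R,
     (<x,p> - L_H^**(y,p)) + (<y,q> - L_H^**(x,q)) <= 0,
   and taking suprema over p and q yields H(x,y) <= -H(y,x) for H = H_{L_H^**}. *)

From Stdlib Require Import Reals Lra Lia ClassicalEpsilon Classical.
Open Scope R_scope.

Lemma Rsup_ub (E : R -> Prop) (v : R) : bound E -> E v -> v <= Rsup E.
Proof.
  intros Ebound Ev. unfold Rsup.
  destruct (excluded_middle_informative (bound E)) as [Hb|Hb]; [|contradiction].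
  destruct (excluded_middle_informative (exists x, E x)) as [He|He]; [|exfalso; eauto].
  destruct (completeness E Hb He) as [s s_lub]; simpl. now apply (proj1 s_lub).
Qed.

Lemma Rsup_le (E : R -> Prop) (m : R) :
  (exists x, E x) -> (forall v, E v -> v <= m) -> Rsup E <= m.
Proof.
  intros Ene m_ub. unfold Rsup.
  destruct (excluded_middle_informative (bound E)) as [Hb|Hb];
    [|exfalso; apply Hb; now exists m].
  destruct (excluded_middle_informative (exists x, E x)) as [He|He]; [|contradiction].
  destruct (completeness E Hb He) as [s s_lub]; simpl. now apply (proj2 s_lub).
Qed.

Lemma Rsup_le_opp_Rsup (A B : R -> Prop) :
  (exists a, A a) -> (exists b, B b) ->
  (forall a b, A a -> B b -> a + b <= 0) -> Rsup A <= - Rsup B.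
Proof.
  intros [a0 Aa0] Bne AB.
  assert (supB_le : forall a, A a -> Rsup B <= - a).
  { intros a Aa. apply Rsup_le; auto. intros b Bb. specialize (AB a b Aa Bb). lra. }
  apply Rsup_le; [now exists a0|]. intros a Aa. specialize (supB_le a Aa). lra.
Qed.

Lemma Rabs_le_inv (a b : R) : Rabs a <= b -> - b <= a <= b.
Proof. unfold Rabs. destruct (Rcase_abs a); lra. Qed.

Lemma rsum_ext (n : nat) (f g : nat -> R) :
  (forall i, (i < n)%nat -> f i = g i) -> rsum n f = rsum n g.
Proof.
  induction n as [|k IH]; simpl; intros fg; auto.
  rewrite IH by (intros; apply fg; lia). now rewrite fg by lia.
Qed.

Lemma rsum_le (n : nat) (f g : nat -> R) :
  (forall i, (i < n)%nat -> f i <= g i) -> rsum n f <= rsum n g.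
Proof.
  induction n as [|k IH]; simpl; intros fg; [lra|].
  assert (rsum k f <= rsum k g) by (apply IH; intros; apply fg; lia).
  assert (f k <= g k) by (apply fg; lia). lra.
Qed.

Lemma rsum_const (n : nat) (c : R) : rsum n (fun _ => c) = INR n * c.
Proof. induction n as [|k IH]; simpl rsum; [simpl; ring|]. rewrite IH, S_INR. ring. Qed.

Lemma rsum_nonneg (n : nat) (f : nat -> R) : (forall i, (i < n)%nat -> 0 <= f i) -> 0 <= rsum n f.
Proof.
  intros f_ge0. replace 0 with (rsum n (fun _ => 0)) by (rewrite rsum_const; ring).
  now apply rsum_le.
Qed.

Lemma rsum_plus (n : nat) (f g : nat -> R) : rsum n (fun i => f i + g i) = rsum n f + rsum n g.
Proof. induction n as [|k IH]; simpl; [ring|]. rewrite IH. ring. Qed.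

Lemma le_rsum (n : nat) (f : nat -> R) (i : nat) :
  (forall j, (j < n)%nat -> 0 <= f j) -> (i < n)%nat -> f i <= rsum n f.
Proof.
  induction n as [|k IH]; intros f_ge0 Hi; [lia|]. simpl.
  assert (0 <= rsum k f) by (apply rsum_nonneg; intros; apply f_ge0; lia).
  destruct (Nat.eq_dec i k) as [->|Hik]; [lra|].
  assert (f i <= rsum k f) by (apply IH; [intros; apply f_ge0|]; lia).
  assert (0 <= f k) by (apply f_ge0; lia). lra.
Qed.

Lemma Rabs_rsum_le (n : nat) (f : nat -> R) : Rabs (rsum n f) <= rsum n (fun i => Rabs (f i)).
Proof.
  induction n as [|k IH]; simpl; [rewrite Rabs_R0; lra|].
  eapply Rle_trans; [apply Rabs_triang|]. lra.
Qed.

Lemma rsum_sqr_le (n : nat) (f : nat -> R) :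
  rsum n (fun i => f i ^ 2) <= rsum n (fun i => Rabs (f i)) ^ 2.
Proof.
  induction n as [|k IH]; cbn [rsum]; [lra|].
  assert (0 <= rsum k (fun i => Rabs (f i))) by (apply rsum_nonneg; intros; apply Rabs_pos).
  assert (f k ^ 2 = Rabs (f k) ^ 2) by (unfold Rabs; destruct Rcase_abs; ring).
  pose proof (Rabs_pos (f k)). nra.
Qed.

Lemma Un_cv_rsum (n : nat) (u : nat -> nat -> R) (l : nat -> R) :
  (forall i, (i < n)%nat -> Un_cv (fun m => u m i) (l i)) ->
  Un_cv (fun m => rsum n (u m)) (rsum n l).
Proof.
  induction n as [|k IH]; intros cv_u; simpl.
  - intros eps Heps. exists O. intros m _. unfold Rdist. rewrite Rminus_0_r, Rabs_R0. lra.
  - apply CV_plus; [apply IH; intros; apply cv_u|apply cv_u]; lia.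
Qed.

Section Vectors.

Variable N : nat.

Lemma Rabs_coord_le_vnorm (x : vec N) (i : nat) : Rabs (coord x i) <= vnorm x.
Proof.
  destruct (Nat.lt_ge_cases i N) as [Hi|Hi].
  - unfold vnorm, inner. rewrite <- sqrt_Rsqr_abs. apply sqrt_le_1_alt.
    apply (le_rsum N (fun j => coord x j * coord x j)); auto.
    intros; apply Rle_0_sqr.
  - unfold coord. rewrite (proj2_sig x i Hi), Rabs_R0. apply sqrt_pos.
Qed.

Lemma Rabs_inner_le (a b : vec N) : Rabs (inner a b) <= INR N * (vnorm a * vnorm b).
Proof.
  unfold inner. eapply Rle_trans; [apply Rabs_rsum_le|].
  rewrite <- rsum_const. apply rsum_le. intros i _. rewrite Rabs_mult.
  apply Rmult_le_compat; auto using Rabs_pos, Rabs_coord_le_vnorm.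
Qed.

Lemma inner_comm (a b : vec N) : inner a b = inner b a.
Proof. apply rsum_ext. intros; ring. Qed.

(* The l^1 distance: unlike [vdist] its triangle inequality is immediate. *)
Definition dist1 (a b : vec N) : R := rsum N (fun i => Rabs (coord a i - coord b i)).

Lemma vdist_le_dist1 (a b : vec N) : vdist a b <= dist1 a b.
Proof.
  unfold vdist, dist1.
  rewrite <- (sqrt_pow2 (rsum N (fun i => Rabs (coord a i - coord b i)))).
  - apply sqrt_le_1_alt, (rsum_sqr_le N (fun i => coord a i - coord b i)).
  - apply rsum_nonneg. intros; apply Rabs_pos.
Qed.

Lemma dist1_le_vdist (a b : vec N) : dist1 a b <= INR N * vdist a b.
Proof.
  unfold dist1. rewrite <- rsum_const. apply rsum_le. intros i Hi.
  unfold vdist. rewrite <- sqrt_Rsqr_abs. apply sqrt_le_1_alt.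
  replace (Rsqr _) with ((coord a i - coord b i) ^ 2) by (unfold Rsqr; ring).
  apply (le_rsum N (fun j => (coord a j - coord b j) ^ 2) i); auto.
  intros; apply pow2_ge_0.
Qed.

Lemma dist1_triangle (a b c : vec N) : dist1 a c <= dist1 a b + dist1 b c.
Proof.
  unfold dist1. rewrite <- rsum_plus. apply rsum_le. intros i _.
  replace (coord a i - coord c i)
    with ((coord a i - coord b i) + (coord b i - coord c i)) by ring.
  apply Rabs_triang.
Qed.

Definition vec_of (l : nat -> R) : vec N.
Proof.
  exists (fun i => if Compare_dec.lt_dec i N then l i else 0).
  intros i Hi. destruct (Compare_dec.lt_dec i N); [lia|reflexivity].
Defined.

Lemma coord_vec_of (l : nat -> R) (i : nat) : (i < N)%nat -> coord (vec_of l) i = l i.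
Proof. intros Hi. unfold coord; simpl. destruct (Compare_dec.lt_dec i N); [reflexivity|lia]. Qed.

Lemma in_ball_vec0 (r : R) : 0 < r -> in_ball r (vec_of (fun _ => 0)).
Proof.
  intros r_gt0. unfold in_ball, vnorm, inner.
  rewrite (rsum_ext N _ (fun _ => 0)), rsum_const, Rmult_0_r, sqrt_0; auto.
  intros i Hi. rewrite coord_vec_of by exact Hi. ring.
Qed.

Lemma Un_cv_dist1 (v : nat -> vec N) (l : nat -> R) :
  (forall i, (i < N)%nat -> Un_cv (fun n => coord (v n) i) (l i)) ->
  Un_cv (fun n => dist1 (vec_of l) (v n)) 0.
Proof.
  intros cv_v. replace 0 with (rsum N (fun _ => 0)) by (rewrite rsum_const; ring).
  apply Un_cv_rsum. intros i Hi eps Heps. destruct (cv_v i Hi eps Heps) as [n0 Hn0].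
  exists n0. intros n Hn. unfold Rdist in *.
  rewrite Rminus_0_r, Rabs_Rabsolu, coord_vec_of, Rabs_minus_sym by exact Hi.
  now apply Hn0.
Qed.

End Vectors.

Lemma Un_cv_0_lt (w : nat -> R) (eps : R) :
  Un_cv w 0 -> 0 < eps -> exists n0, forall n, (n0 <= n)%nat -> w n < eps.
Proof.
  intros cv_w Heps. destruct (cv_w eps Heps) as [n0 Hn0]. exists n0. intros n Hn.
  specialize (Hn0 n Hn). unfold Rdist in Hn0. rewrite Rminus_0_r in Hn0.
  pose proof (Rle_abs (w n)). lra.
Qed.

Definition strictly_increasing (phi : nat -> nat) : Prop := forall n, (phi n < phi (S n))%nat.

Lemma strictly_increasing_lt (phi : nat -> nat) (m n : nat) :
  strictly_increasing phi -> (m < n)%nat -> (phi m < phi n)%nat.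
Proof. intros phi_inc Hmn. induction Hmn; [apply phi_inc|]. specialize (phi_inc m0). lia. Qed.

Lemma strictly_increasing_ge (phi : nat -> nat) (n : nat) :
  strictly_increasing phi -> (n <= phi n)%nat.
Proof. intros phi_inc. induction n; [lia|]. specialize (phi_inc n). lia. Qed.

Lemma strictly_increasing_comp (phi psi : nat -> nat) :
  strictly_increasing phi -> strictly_increasing psi ->
  strictly_increasing (fun n => phi (psi n)).
Proof. intros phi_inc psi_inc n. now apply strictly_increasing_lt. Qed.

Lemma Un_cv_subseq (u : nat -> R) (l : R) (phi : nat -> nat) :
  strictly_increasing phi -> Un_cv u l -> Un_cv (fun n => u (phi n)) l.
Proof.
  intros phi_inc cv_u eps Heps. destruct (cv_u eps Heps) as [n0 Hn0]. exists n0.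
  intros n Hn. apply Hn0. pose proof (strictly_increasing_ge phi n phi_inc). lia.
Qed.

(* Stdlib's Bolzano-Weierstrass only provides a cluster point [l]; the
   subsequence is built by choosing its k-th term within 1/(k+1) of [l]. *)
Lemma bounded_seq_cv_subseq (u : nat -> R) (M : R) :
  (forall n, Rabs (u n) <= M) ->
  exists phi, strictly_increasing phi /\ exists l, Un_cv (fun n => u (phi n)) l.
Proof.
  intros u_bound.
  destruct (Bolzano_Weierstrass u (fun c => - M <= c <= M) (compact_P3 (- M) M)) as [l Hl].
  { intros n. now apply Rabs_le_inv. }
  assert (near_l : forall k n, exists p, (n <= p)%nat /\ Rabs (u p - l) < / INR (S k)).
  { intros k n. assert (Hpos : 0 < / INR (S k)) by (apply Rinv_0_lt_compat, lt_0_INR; lia).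
    apply (Hl (disc l (mkposreal _ Hpos))). exists (mkposreal _ Hpos). now intros y. }
  destruct (choice (fun k (g : nat -> nat) => forall n,
              (n <= g n)%nat /\ Rabs (u (g n) - l) < / INR (S k))) as [g Hg].
  { intros k. apply (choice (fun n p => (n <= p)%nat /\ Rabs (u p - l) < / INR (S k))).
    apply near_l. }
  set (phi := fix phi k := match k with O => g O O | S k' => g k (S (phi k')) end).
  assert (phi_near : forall n, Rabs (u (phi n) - l) < / INR (S n)) by (destruct n; apply Hg).
  exists phi. split; [intros n; simpl; destruct (Hg (S n) (S (phi n))); lia|].
  exists l. intros eps Heps.
  destruct (INR_unbounded (/ eps)) as [K HK].
  assert (0 < / eps) by (apply Rinv_0_lt_compat; lra).
  exists K. intros n Hn. unfold Rdist.
  assert (INR K <= INR (S n)) by (apply le_INR; lia).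
  assert (/ INR (S n) < eps).
  { rewrite <- (Rinv_inv eps). apply Rinv_lt_contravar; [apply Rmult_lt_0_compat|]; lra. }
  specialize (phi_near n). lra.
Qed.

Lemma bounded_seqs_cv_subseq (k : nat) (u : nat -> nat -> R) (M : R) :
  (forall n i, Rabs (u n i) <= M) ->
  exists phi, strictly_increasing phi /\
    exists l : nat -> R, forall i, (i < k)%nat -> Un_cv (fun n => u (phi n) i) (l i).
Proof.
  intros u_bound. induction k as [|k [phi [phi_inc [l cv_l]]]].
  - exists (fun n => n). split; [intros n; lia|]. exists (fun _ => 0). intros; lia.
  - destruct (bounded_seq_cv_subseq (fun n => u (phi n) k) M) as [psi [psi_inc [lk cv_lk]]];
      [intros; apply u_bound|].
    exists (fun n => phi (psi n)). split; [now apply strictly_increasing_comp|].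
    exists (fun i => if Nat.eq_dec i k then lk else l i). intros i Hi.
    destruct (Nat.eq_dec i k) as [->|Hik]; [exact cv_lk|].
    apply (Un_cv_subseq (fun n => u (phi n) i)); [exact psi_inc|]. apply cv_l. lia.
Qed.

Section ClosureCompact.

Variables (N : nat) (Rad : R) (Om : vec N -> Prop).
Hypothesis closure_in_ball : forall x, closure Om x -> in_ball Rad x.

Lemma closure_closed (v : nat -> vec N) (l : vec N) :
  (forall n, closure Om (v n)) -> Un_cv (fun n => dist1 N l (v n)) 0 -> closure Om l.
Proof.
  intros v_cl cv_v eps Heps.
  assert (HN : 0 < INR N + 1) by (pose proof (pos_INR N); lra).
  destruct (Un_cv_0_lt _ (eps / 2) cv_v) as [n Hn]; [lra|].
  destruct (v_cl n (eps / 2 / (INR N + 1))) as [y [Omy Hy]].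
  { apply Rdiv_lt_0_compat; lra. }
  exists y. split; [exact Omy|].
  assert (close_vn : dist1 N l (v n) < eps / 2) by (apply Hn; lia).
  assert (vn_close : dist1 N (v n) y < eps / 2).
  { pose proof (dist1_le_vdist N (v n) y). pose proof (pos_INR N).
    assert (0 <= vdist (v n) y) by apply sqrt_pos.
    assert ((INR N + 1) * vdist (v n) y < (INR N + 1) * (eps / 2 / (INR N + 1)))
      by (apply Rmult_lt_compat_l; lra).
    replace ((INR N + 1) * (eps / 2 / (INR N + 1))) with (eps / 2) in * by (field; lra).
    nra. }
  eapply Rle_lt_trans; [apply vdist_le_dist1|].
  eapply Rle_lt_trans; [apply (dist1_triangle N l (v n) y)|]. lra.
Qed.

Lemma closure_seq_compact (v : nat -> vec N) :
  (forall n, closure Om (v n)) ->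
  exists phi, strictly_increasing phi /\
    exists l, closure Om l /\ Un_cv (fun n => dist1 N l (v (phi n))) 0.
Proof.
  intros v_cl.
  destruct (bounded_seqs_cv_subseq N (fun n i => coord (v n) i) Rad) as [phi [phi_inc [l cv_l]]].
  { intros n i. apply Rlt_le, Rle_lt_trans with (vnorm (v n)).
    - apply Rabs_coord_le_vnorm.
    - apply closure_in_ball, v_cl. }
  assert (cv_phi : Un_cv (fun n => dist1 N (vec_of N l) (v (phi n))) 0)
    by (apply Un_cv_dist1; exact cv_l).
  exists phi. split; [exact phi_inc|]. exists (vec_of N l). split; [|exact cv_phi].
  apply (closure_closed (fun n => v (phi n))); auto.
Qed.

Lemma cont_on_cl2_bounded_below (H : vec N -> vec N -> R) :
  cont_on_cl2 Om H -> exists M, forall x y, closure Om x -> closure Om y -> - M <= H x y.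
Proof.
  intros H_cont. apply NNPP. intros unbounded.
  destruct (choice (fun n (ab : vec N * vec N) =>
      closure Om (fst ab) /\ closure Om (snd ab) /\ H (fst ab) (snd ab) < - INR n)) as [ab Hab].
  { intros n. apply NNPP. intros none. apply unbounded. exists (INR n).
    intros x y Hx Hy. apply Rnot_lt_le. intros Hlt. apply none. now exists (x, y). }
  set (a := fun n => fst (ab n)). set (b := fun n => snd (ab n)).
  destruct (closure_seq_compact a) as [phi [phi_inc [la [cl_la cv_a]]]]; [apply Hab|].
  destruct (closure_seq_compact (fun n => b (phi n))) as [psi [psi_inc [lb [cl_lb cv_b]]]];
    [intros; apply Hab|].
  set (chi := fun n => phi (psi n)).
  destruct (H_cont la lb cl_la cl_lb 1 Rlt_0_1) as [d [Hd H_near]].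
  destruct (Un_cv_0_lt _ d (Un_cv_subseq _ 0 psi psi_inc cv_a) Hd) as [n1 Hn1].
  destruct (Un_cv_0_lt _ d cv_b Hd) as [n2 Hn2].
  destruct (INR_unbounded (1 - H la lb)) as [K HK].
  set (n := Nat.max K (Nat.max n1 n2)).
  assert (H_close : Rabs (H (a (chi n)) (b (chi n)) - H la lb) < 1).
  { apply H_near; try apply Hab; eapply Rle_lt_trans; try apply vdist_le_dist1.
    - apply Hn1. unfold n. lia.
    - apply Hn2. unfold n. lia. }
  assert (INR K <= INR (chi n)).
  { apply le_INR. pose proof (strictly_increasing_ge chi n (strictly_increasing_comp _ _ phi_inc psi_inc)).
    unfold n in *. lia. }
  destruct (Hab (chi n)) as [_ [_ H_small]].
  apply Rlt_le, Rabs_le_inv in H_close. unfold a, b in *. lra.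
Qed.

End ClosureCompact.

Section Biconjugate.

Variables (N : nat) (Rad M : R) (Om : vec N -> Prop) (H : vec N -> vec N -> R).
Hypothesis closure_in_ball : forall x, closure Om x -> in_ball Rad x.
Hypothesis H_antisym : forall x y, closure Om x -> closure Om y -> H x y <= - H y x.
Hypothesis H_ge : forall x y, closure Om x -> closure Om y -> - M <= H x y.

Local Notation cl := (closure Om).
Local Notation ball := (in_ball Rad).
Local Notation L := (L_H Om H).
Local Notation Ls := (L_H_star Rad Om H).
Local Notation Lss := (L_H_star2 Rad Om H).

Let C := INR N * (Rad * Rad).

Lemma inner_ball_bound (a b : vec N) : ball a -> ball b -> - C <= inner a b <= C.
Proof.
  intros Ha Hb. apply Rabs_le_inv. eapply Rle_trans; [apply Rabs_inner_le|].
  unfold C, in_ball, vnorm in *.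
  pose proof (sqrt_pos (inner a a)). pose proof (sqrt_pos (inner b b)).
  apply Rmult_le_compat_l; [apply pos_INR|].
  apply Rmult_le_compat; try apply sqrt_pos; lra.
Qed.

Lemma L_H_ge (x p z : vec N) : cl x -> ball p -> cl z -> inner z p - H z x <= L x p.
Proof.
  intros Hx Hp Hz. apply Rsup_ub; [|now exists z].
  exists (C + M). intros v [w [Hw ->]].
  pose proof (inner_ball_bound w p (closure_in_ball w Hw) Hp). pose proof (H_ge w x Hw Hx). lra.
Qed.

Lemma L_H_le (x p : vec N) : cl x -> ball p -> L x p <= C + M.
Proof.
  intros Hx Hp. apply Rsup_le; [now exists (inner x p - H x x), x|].
  intros v [w [Hw ->]].
  pose proof (inner_ball_bound w p (closure_in_ball w Hw) Hp). pose proof (H_ge w x Hw Hx). lra.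
Qed.

(* This is where the antisymmetry of H enters. *)
Lemma L_H_star_term_le (p x x' p' : vec N) :
  ball p -> cl x -> cl x' -> ball p' -> inner x p' + inner p x' - L x' p' <= L x p.
Proof.
  intros Hp Hx Hx' Hp'.
  pose proof (L_H_ge x' p' x Hx' Hp' Hx). pose proof (L_H_ge x p x' Hx Hp Hx').
  pose proof (H_antisym x x' Hx Hx'). rewrite (inner_comm N p x'). lra.
Qed.

Lemma L_H_star_le_L_H (p x : vec N) : ball p -> cl x -> Ls p x <= L x p.
Proof.
  intros Hp Hx. apply Rsup_le; [now exists (inner x p + inner p x - L x p), x, p|].
  intros v [x' [p' [Hx' [Hp' ->]]]]. now apply L_H_star_term_le.
Qed.

Lemma L_H_star_ge (p x : vec N) : ball p -> cl x -> - (3 * C + M) <= Ls p x.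
Proof.
  intros Hp Hx.
  assert (inner x p + inner p x - L x p <= Ls p x).
  { apply Rsup_ub; [|now exists x, p].
    exists (C + M). intros v [x' [p' [Hx' [Hp' ->]]]].
    pose proof (L_H_star_term_le p x x' p' Hp Hx Hx' Hp'). pose proof (L_H_le x p Hx Hp). lra. }
  pose proof (inner_ball_bound x p (closure_in_ball x Hx) Hp).
  pose proof (inner_ball_bound p x Hp (closure_in_ball x Hx)).
  pose proof (L_H_le x p Hx Hp). lra.
Qed.

Lemma L_H_star2_ge (y q x p : vec N) :
  cl y -> ball q -> cl x -> ball p -> inner y p + inner q x - Ls p x <= Lss y q.
Proof.
  intros Hy Hq Hx Hp. apply Rsup_ub; [|now exists x, p].
  exists (C + C + (3 * C + M)). intros v [x' [p' [Hx' [Hp' ->]]]].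
  pose proof (inner_ball_bound y p' (closure_in_ball y Hy) Hp').
  pose proof (inner_ball_bound q x' Hq (closure_in_ball x' Hx')).
  pose proof (L_H_star_ge p' x' Hp' Hx'). lra.
Qed.

Lemma L_H_star_le_L_H_star2 (x q : vec N) : cl x -> ball q -> Ls q x <= Lss x q.
Proof.
  intros Hx Hq. apply Rsup_le; [now exists (inner x q + inner q x - L x q), x, q|].
  intros v [x' [p' [Hx' [Hp' ->]]]].
  pose proof (L_H_star_le_L_H p' x' Hp' Hx'). pose proof (L_H_star2_ge x q x' p' Hx Hq Hx' Hp').
  lra.
Qed.

Lemma L_H_star2_pairing (x y p q : vec N) : cl x -> cl y -> ball p -> ball q ->
  (inner x p - Lss y p) + (inner y q - Lss x q) <= 0.
Proof.
  intros Hx Hy Hp Hq.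
  pose proof (L_H_star2_ge y p x q Hy Hp Hx Hq). pose proof (L_H_star_le_L_H_star2 x q Hx Hq).
  rewrite (inner_comm N p x) in *. lra.
Qed.

Lemma H_L_L_H_star2_antisym (x y : vec N) : 0 < Rad -> cl x -> cl y ->
  H_L Rad Lss x y <= - H_L Rad Lss y x.
Proof.
  intros HR Hx Hy. pose proof (in_ball_vec0 N Rad HR) as ball0.
  apply Rsup_le_opp_Rsup; [eexists; eexists; eauto..|].
  intros a b [p [Hp ->]] [q [Hq ->]]. now apply L_H_star2_pairing.
Qed.

End Biconjugate.

Theorem lemma2p4 (N : nat) (Rad : R) (Om : vec N -> Prop) (H : vec N -> vec N -> R) :
  0 < Rad ->
  is_domain Om -> is_bounded Om ->
  (forall x, closure Om x -> in_ball Rad x) ->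
  in_Hminus Om H ->
  forall x y, closure Om x -> closure Om y ->
    H_L Rad (L_H_star2 Rad Om H) x y <= - H_L Rad (L_H_star2 Rad Om H) y x.
Proof.
  intros HR _ _ closure_in_ball [H_cont H_antisym] x y Hx Hy.
  destruct (cont_on_cl2_bounded_below N Rad Om closure_in_ball H H_cont) as [M H_ge].
  now apply (H_L_L_H_star2_antisym N Rad M Om H).
Qed.
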